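(* Let $\Lambda$ be a left cancellative small category and $v\in\Lambda^0$. For $C\in v\Lambda^*$ let $\mathcal U^0_C=\{E\setminus\bigcup\mathcal F: E\in C,\ \mathcal F\subseteq\mathcal D^{(0)}_v\text{ finite and }\mathcal F\text{ does not cover }C\}$. Then $\mathcal U^0_C$ is an ultrafilter base in the ring $\mathcal A_v$; let $\mathcal U_C$ be the ultrafilter it generates. The map $C\mapsto\mathcal U_C$ is a bijection from $v\Lambda^*$ onto the set of ultrafilters in $\mathcal A_v$, with inverse $\mathcal U\mapsto\mathcal U\cap\mathcal D^{(0)}_v$.
   Context: A left cancellative small category (LCSC) is a small category $\Lambda$ such that $\alpha\beta=\alpha\gamma$ implies $\beta=\gamma$. Morphisms are composed as $\alpha\beta$ when $s(\alpha)=r(\beta)$; $\Lambda^0$ is the set of objects, identified with identity morphisms; $v\Lambda=\{\alpha:r(\alpha)=v\}$; $\alpha\Lambda=\{\alpha\beta:r(\beta)=s(\alpha)\}$. For $\alpha\in\Lambda$, $\tau^\alpha(\beta)=\alpha\beta$ on $s(\alpha)\Lambda$ and $\sigma^\alpha:\alpha\Lambda\to s(\alpha)\Lambda$ is its inverse. A zigzag is a tuple $\zeta=(\alpha_1,\beta_1,\dots,\alpha_n,\beta_n)$ with $r(\alpha_i)=r(\beta_i)$ and $s(\alpha_{i+1})=s(\beta_i)$; $s(\zeta)=s(\beta_n)$, $\mathcal Zv=\{\zeta:s(\zeta)=v\}$. The zigzag map $\varphi_\zeta=\sigma^{\alpha_1}\circ\tau^{\beta_1}\circ\cdots\circ\sigma^{\alpha_n}\circ\tau^{\beta_n}$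 (composition of partial maps) has domain $A(\zeta)\subseteq s(\zeta)\Lambda$. $\mathcal D^{(0)}_v$ is the set of nonempty $A(\zeta)$, $\zeta\in\mathcal Zv$ (closed under nonempty intersections), and $\mathcal A_v$ is the ring of subsets of $v\Lambda$ generated by $\mathcal D^{(0)}_v$. In a ring of sets $\mathcal A$, a filter is a nonempty collection of nonempty members closed under intersections and supersets (in $\mathcal A$), an ultrafilter is a maximal filter, and an ultrafilter base is a nonempty family of nonempty members such that the intersection of any two contains a third and the filter it generates (by closing under supersets) is an ultrafilter. A filter in $\mathcal D^{(0)}_v$ is a nonempty $C\subseteq\mathcal D^{(0)}_v$ closed under intersection and under supersets within $\mathcal D^{(0)}_v$. A finite $\mathcal F\subseteq\mathcal D^{(0)}_v$ covers the filter $C$ if some $E\in C$ satisfies $E\subseteq\bigcup\mathcal F$. $v\Lambda^*$ is the set of filters $C$ in $\mathcal D^{(0)}_v$ such that every finite $\mathcal F\subseteq\mathcal D^{(0)}_v$ with $\mathcal F\cap C=\varnothing$ does not cover $C$. *)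

From Stdlib Require Import List.
Import ListNotations.
Set Implicit Arguments.

(* Objects form a type [Obj]; morphisms form a type [Mor]; composition
   [comp a b] = "a b" is a total function that is only meaningful when
   [src a = rng b].  Objects are identified with identity morphisms via [ident]. *)
Record LCSC := {
  Obj : Type;
  Mor : Type;
  src : Mor -> Obj;
  rng : Mor -> Obj;
  ident : Obj -> Mor;
  comp : Mor -> Mor -> Mor;
  src_ident : forall v, src (ident v) = v;
  rng_ident : forall v, rng (ident v) = v;
  rng_comp : forall a b, src a = rng b -> rng (comp a b) = rng a;
  src_comp : forall a b, src a = rng b -> src (comp a b) = src b;
  comp_ident_l : forall a, comp (ident (rng a)) a = a;
  comp_ident_r : forall a, comp a (ident (src a)) = a;
  comp_assoc : forall a b c, src a = rng b -> src b = rng c ->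
      comp a (comp b c) = comp (comp a b) c;
  left_cancel : forall a b c, src a = rng b -> src a = rng c ->
      comp a b = comp a c -> b = c
}.

Section Defs.
Variable L : LCSC.
Local Notation M := (Mor L).

Definition mset := M -> Prop.
Definition family := mset -> Prop.

Definition subset (E F : mset) : Prop := forall x, E x -> F x.
Definition inter (E F : mset) : mset := fun x => E x /\ F x.
Definition union (E F : mset) : mset := fun x => E x \/ F x.
Definition diff (E F : mset) : mset := fun x => E x /\ ~ F x.
Definition emptyset : mset := fun _ => False.
Definition nonempty (E : mset) : Prop := exists x, E x.
Definition bigunion (l : list mset) : mset := fun x => exists F, In F l /\ F x.

(* A zigzag (a1,b1,...,an,bn) is a nonempty list of pairs [(a_i, b_i)]. *)
Definition zigzag := list (M * M).

Fixpoint zz_ok (z : zigzag) : Prop :=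
  match z with
  | [] => False
  | [(a, b)] => rng L a = rng L b
  | (a, b) :: (((a', _) :: _) as rest) =>
      rng L a = rng L b /\ src L a' = src L b /\ zz_ok rest
  end.

Definition zz_src (z : zigzag) (v : Obj L) : Prop :=
  exists a b, last z (a, b) = (a, b) /\ z <> [] /\ src L b = v.

(* Graph of tau^b : x |-> b x, defined on src(b) Lambda *)
Definition tau_rel (b x y : M) : Prop := rng L x = src L b /\ y = comp L b x.
(* Graph of sigma^a : a y |-> y, defined on a Lambda *)
Definition sigma_rel (a x y : M) : Prop := rng L y = src L a /\ x = comp L a y.

(* Graph of the zigzag map phi_z = sigma^{a1} o tau^{b1} o ... o sigma^{an} o tau^{bn}
   (composition of partial maps, rightmost applied first). *)
Fixpoint zz_rel (z : zigzag) : M -> M -> Prop :=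
  match z with
  | [] => fun x y => x = y
  | (a, b) :: rest => fun x y =>
      exists z1 z2, zz_rel rest x z1 /\ tau_rel b z1 z2 /\ sigma_rel a z2 y
  end.

Definition zz_dom (z : zigzag) : mset := fun x => exists y, zz_rel z x y.

Definition vLam (v : Obj L) : mset := fun x => rng L x = v.

Definition D0 (v : Obj L) : family :=
  fun E => exists z, zz_ok z /\ zz_src z v /\ E = zz_dom z /\ nonempty E.

Definition is_ring (R : family) : Prop :=
  R emptyset /\
  (forall E F, R E -> R F -> R (union E F)) /\
  (forall E F, R E -> R F -> R (diff E F)).

Definition ring_gen (D : family) : family :=
  fun E => forall R, is_ring R -> (forall F, D F -> R F) -> R E.

Definition Av (v : Obj L) : family := ring_gen (D0 v).

Definition fam_sub (P Q : family) : Prop := forall E, P E -> Q E.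
Definition fam_eq (P Q : family) : Prop := forall E, P E <-> Q E.

Definition is_filter (A U : family) : Prop :=
  (exists E, U E) /\
  (forall E, U E -> A E /\ nonempty E) /\
  (forall E F, U E -> U F -> U (inter E F)) /\
  (forall E F, U E -> A F -> subset E F -> U F).

Definition is_ultrafilter (A U : family) : Prop :=
  is_filter A U /\ (forall U', is_filter A U' -> fam_sub U U' -> fam_sub U' U).

Definition gen_filter (A B : family) : family :=
  fun E => A E /\ exists F, B F /\ subset F E.

Definition is_ultrafilter_base (A B : family) : Prop :=
  (exists E, B E) /\
  (forall E, B E -> A E /\ nonempty E) /\
  (forall E F, B E -> B F -> exists G, B G /\ subset G (inter E F)) /\
  is_ultrafilter A (gen_filter A B).

Definition is_D0_filter (v : Obj L) (C : family) : Prop :=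
  (exists E, C E) /\
  (forall E, C E -> D0 v E) /\
  (forall E F, C E -> C F -> C (inter E F)) /\
  (forall E F, C E -> D0 v F -> subset E F -> C F).

Definition covers (C : family) (l : list mset) : Prop :=
  exists E, C E /\ subset E (bigunion l).

Definition vLstar (v : Obj L) (C : family) : Prop :=
  is_D0_filter v C /\
  (forall l : list mset, (forall F, In F l -> D0 v F) ->
     (forall F, In F l -> ~ C F) -> ~ covers C l).

Definition U0 (v : Obj L) (C : family) : family :=
  fun S => exists E l, C E /\ (forall F, In F l -> D0 v F) /\ ~ covers C l /\
                     S = diff E (bigunion l).

Definition UC (v : Obj L) (C : family) : family := gen_filter (Av v) (U0 v C).

Definition restrD0 (v : Obj L) (U : family) : family := fun E => U E /\ D0 v E.

End Defs.

(* Every element of the ring A_v lies inside a finite union of members of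
   D^(0)_v, and D^(0)_v is closed under nonempty intersections because
   A(z) ∩ A(z') = A(z z'^{-1} z'), the zigzag maps being injective by left
   cancellation.  For C in vΛ*, the sets E \ ∪F decide every member of A_v:
   one of them lies inside it or is disjoint from it (for a generator F not in
   C use E \ F, which is legitimate precisely because F does not cover C); a
   directed base deciding a whole ring generates an ultrafilter.  Conversely an
   ultrafilter U of A_v is prime, so U ∩ D^(0)_v is nonempty, satisfies the
   covering condition, and contains enough of U0 to generate U back. *)

From Stdlib Require Import List Classical FunctionalExtensionality PropExtensionality.
Import ListNotations.

Section RingsOfSets.
Context {L : LCSC}.
Implicit Types (E F G S : mset L) (A B D U : family L) (l : list (mset L)).

Lemma set_ext E F : (forall x, E x <-> F x) -> E = F.
Proof.
  intro H. apply functional_extensionality; intro x.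
  apply propositional_extensionality; auto.
Qed.

Definition disjoint E F : Prop := forall x, E x -> F x -> False.

Lemma bigunion_nil : bigunion [] = emptyset L.
Proof. apply set_ext; intro x. split; [intros [F [[] _]] | intros []]. Qed.

Lemma bigunion_cons F l : bigunion (F :: l) = union F (bigunion l).
Proof.
  apply set_ext; intro x. unfold bigunion, union; simpl. split.
  - intros [G [[<- | HG] Gx]]; eauto.
  - intros [Fx | [G [HG Gx]]]; eauto.
Qed.

Lemma bigunion_app l l' x :
  bigunion (l ++ l') x <-> bigunion l x \/ bigunion l' x.
Proof.
  unfold bigunion. split.
  - intros [G [HG Gx]]. apply in_app_or in HG as [HG | HG]; eauto.
  - intros [[G [HG Gx]] | [G [HG Gx]]]; exists G; split; auto; apply in_or_app; auto.
Qed.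

Lemma ring_inter A E F : is_ring A -> A E -> A F -> A (inter E F).
Proof.
  intros (_ & _ & Hdiff) HE HF.
  replace (inter E F) with (diff E (diff E F)) by
    (apply set_ext; intro x; unfold diff, inter; split;
       [intros [Ex H]; split; [|apply NNPP]; tauto | tauto]).
  auto.
Qed.

Lemma ring_bigunion A l : is_ring A -> (forall F, In F l -> A F) -> A (bigunion l).
Proof.
  intros (Hempty & Hunion & _) Hl. induction l as [|F l IH].
  - rewrite bigunion_nil. auto.
  - rewrite bigunion_cons. apply Hunion; [apply Hl | apply IH; intros; apply Hl]; simpl; auto.
Qed.

Lemma ring_gen_is_ring D : is_ring (ring_gen D).
Proof.
  split; [|split].
  - intros R HR _. apply HR.
  - intros E F HE HF R HR HD. apply HR; [apply HE | apply HF]; auto.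
  - intros E F HE HF R HR HD. apply HR; [apply HE | apply HF]; auto.
Qed.

Lemma ring_gen_sub D F : D F -> ring_gen D F.
Proof. intros HF R _ HD. auto. Qed.

Lemma ring_gen_covered D S : ring_gen D S ->
  exists l, (forall F, In F l -> D F) /\ subset S (bigunion l).
Proof.
  intro HS. apply HS; [split; [|split] |].
  - exists []. split; [intros _ [] | intros x []].
  - intros E F [l [Hl HE]] [l' [Hl' HF]]. exists (l ++ l'). split.
    + intros G HG. apply in_app_or in HG as [HG | HG]; auto.
    + intros x [Ex | Fx]; apply bigunion_app; auto.
  - intros E F [l [Hl HE]] _. exists l. split; auto. intros x [Ex _]; auto.
  - intros F HF. exists [F]. split.
    + intros G [<- | []]; auto.
    + intros x Fx. exists F; simpl; auto.
Qed.

(** * Directed bases deciding a ring *)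

Definition directed B : Prop :=
  forall E F, B E -> B F -> exists G, B G /\ subset G (inter E F).

Definition decides B S : Prop := exists G, B G /\ (subset G S \/ disjoint G S).

Lemma decides_is_ring B : (exists G, B G) -> directed B -> is_ring (decides B).
Proof.
  intros [G0 HG0] Hdir. split; [|split].
  - exists G0. split; auto. right. intros x _ [].
  - intros E F [G1 [HG1 [H1 | H1]]] [G2 [HG2 H2]].
    + exists G1. split; auto. left. intros x Hx; left; auto.
    + destruct H2 as [H2 | H2].
      * exists G2. split; auto. left. intros x Hx; right; auto.
      * destruct (Hdir _ _ HG1 HG2) as [G [HG HGs]]. exists G. split; auto.
        right. intros x Gx [Ex | Fx]; destruct (HGs x Gx); eauto.
  - intros E F [G1 [HG1 [H1 | H1]]] [G2 [HG2 H2]].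
    + destruct (Hdir _ _ HG1 HG2) as [G [HG HGs]]. exists G. split; auto.
      destruct H2 as [H2 | H2].
      * right. intros x Gx [_ nFx]. apply nFx, H2, (HGs x Gx).
      * left. intros x Gx. destruct (HGs x Gx). split; eauto.
    + exists G1. split; auto. right. intros x Gx [Ex _]; eauto.
Qed.

Lemma gen_filter_is_filter A B :
  is_ring A -> (exists G, B G) -> (forall G, B G -> A G /\ nonempty G) ->
  directed B -> is_filter A (gen_filter A B).
Proof.
  intros HA [G0 HG0] HB Hdir. split; [|split; [|split]].
  - exists G0. split; [apply HB; auto |]. exists G0. split; auto. intros x; auto.
  - intros E [HE [G [HG HGE]]]. split; auto.
    destruct (proj2 (HB G HG)) as [x Gx]. exists x; auto.
  - intros E F [HE [G [HG HGE]]] [HF [G' [HG' HG'F]]].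
    split; [apply ring_inter; auto |].
    destruct (Hdir _ _ HG HG') as [G'' [HG'' Hsub]]. exists G''. split; auto.
    intros x Hx. destruct (Hsub x Hx). split; auto.
  - intros E F [HE [G [HG HGE]]] HF HEF. split; auto.
    exists G. split; auto. intros x Hx; auto.
Qed.

Lemma ultrafilter_base_of_decides A B :
  is_ring A -> (exists G, B G) -> (forall G, B G -> A G /\ nonempty G) ->
  directed B -> (forall S, A S -> decides B S) -> is_ultrafilter_base A B.
Proof.
  intros HA Hex HB Hdir Hdec.
  split; [|split; [|split]]; auto. split; [apply gen_filter_is_filter; auto |].
  intros U' (_ & HU'A & HU'inter & _) Hsub S HS.
  destruct (Hdec S (proj1 (HU'A S HS))) as [G [HG [HGS | HGS]]].
  - split; [apply HU'A; auto |]. eauto.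
  - assert (HGU' : U' G).
    { apply Hsub. split; [apply HB; auto |]. exists G. split; auto. intros x; auto. }
    destruct (proj2 (HU'A _ (HU'inter _ _ HS HGU'))) as [x [Sx Gx]].
    exfalso; eauto.
Qed.

(** * Ultrafilters in a ring of sets are prime *)

Section Ultrafilter.
Variables A U : family L.
Hypothesis HA : is_ring A.
Hypothesis HU : is_ultrafilter A U.

Let HUA : forall E, U E -> A E /\ nonempty E := proj1 (proj2 (proj1 HU)).
Let HUinter : forall E F, U E -> U F -> U (inter E F) := proj1 (proj2 (proj2 (proj1 HU))).
Let HUup : forall E F, U E -> A F -> subset E F -> U F := proj2 (proj2 (proj2 (proj1 HU))).

(* Otherwise the traces Y ∩ S with Y in U would generate a strictly larger filter. *)
Lemma ultrafilter_dichotomy S : A S -> U S \/ exists Y, U Y /\ disjoint Y S.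
Proof.
  intros HS. destruct (classic (exists Y, U Y /\ disjoint Y S)) as [H | Hmeets]; auto.
  left. pose proof HU as [[[E0 HE0] _] Hmax].
  set (U' := fun X => A X /\ exists Y, U Y /\ subset (inter Y S) X).
  assert (HU' : is_filter A U').
  { split; [|split; [|split]].
    - exists S. split; auto. exists E0. split; auto. intros x [_ Sx]; auto.
    - intros E [HE [Y [HY HYE]]]. split; auto. apply NNPP. intro Hempty.
      apply Hmeets. exists Y. split; auto. intros x Yx Sx. apply Hempty.
      exists x. apply HYE. split; auto.
    - intros E F [HE [Y [HY HYE]]] [HF [Y' [HY' HY'F]]].
      split; [apply ring_inter; auto |]. exists (inter Y Y'). split; [apply HUinter; auto |].
      intros x [[Yx Y'x] Sx]. split; [apply HYE | apply HY'F]; split; auto.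
    - intros E F [HE [Y [HY HYE]]] HF HEF. split; auto.
      exists Y. split; auto. intros x Hx; auto. }
  apply (Hmax U' HU').
  - intros E HE. split; [apply HUA; auto |]. exists E. split; auto. intros x [Ex _]; auto.
  - split; auto. exists E0. split; auto. intros x [_ Sx]; auto.
Qed.

Lemma ultrafilter_prime l :
  (forall F, In F l -> A F) -> U (bigunion l) -> exists F, In F l /\ U F.
Proof.
  induction l as [|F l IH]; intros Hl Hunion.
  - rewrite bigunion_nil in Hunion. destruct (HUA _ Hunion) as [_ [x []]].
  - destruct (ultrafilter_dichotomy F (Hl F (or_introl eq_refl))) as [HF | [Y [HY HYF]]].
    + exists F; simpl; auto.
    + destruct IH as [G [HG HGU]].
      * intros; apply Hl; simpl; auto.
      * apply (HUup (inter (bigunion (F :: l)) Y)); [apply HUinter; auto | |].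
        -- apply ring_bigunion; auto. intros; apply Hl; simpl; auto.
        -- rewrite bigunion_cons. intros x [[Fx | Hx] Yx]; [exfalso; eauto | auto].
      * exists G; simpl; auto.
Qed.

Lemma ultrafilter_diff_bigunion E l : U E ->
  (forall F, In F l -> A F) -> (forall F, In F l -> ~ U F) -> U (diff E (bigunion l)).
Proof.
  intros HE Hl Hnot.
  assert (Hdiff : A (diff E (bigunion l)))
    by (apply (proj2 (proj2 HA)); [apply HUA | apply ring_bigunion]; auto).
  destruct (ultrafilter_dichotomy _ Hdiff) as [H | [Y [HY HYd]]]; auto.
  destruct (ultrafilter_prime l Hl) as [F [HF HFU]].
  - apply (HUup (inter E Y)); [apply HUinter; auto | apply ring_bigunion; auto |].
    intros x [Ex Yx]. apply NNPP. intro Hx. apply (HYd x); auto. split; auto.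
  - exfalso. apply (Hnot F); auto.
Qed.

End Ultrafilter.
End RingsOfSets.

(** * Zigzags *)

Section Zigzags.
Context {L : LCSC}.
Implicit Types (z : zigzag L).

Fixpoint zz_rev z : zigzag L :=
  match z with [] => [] | (a, b) :: q => zz_rev q ++ [(b, a)] end.

Lemma zz_rev_rcons r a b : zz_rev (r ++ [(a, b)]) = (b, a) :: zz_rev r.
Proof. induction r as [|[c d] r IH]; simpl; auto. rewrite IH. reflexivity. Qed.

Lemma zz_rel_app z z' x y : zz_rel (z ++ z') x y <-> exists m, zz_rel z' x m /\ zz_rel z m y.
Proof.
  revert y; induction z as [|[a b] z IH]; intro y; simpl.
  - split; [intro H; exists y; auto | intros [m [H ->]]; auto].
  - split.
    + intros [z1 [z2 [H1 H2]]]. apply IH in H1 as [m [Hm1 Hm2]].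
      exists m. split; [| exists z1, z2]; auto.
    + intros [m [Hm [z1 [z2 [H1 H2]]]]]. exists z1, z2. split; auto.
      apply IH. eauto.
Qed.

Lemma zz_rel_rev z x y : zz_rel (zz_rev z) x y <-> zz_rel z y x.
Proof.
  revert x y; induction z as [|[a b] z IH]; intros x y; simpl.
  - split; auto.
  - rewrite zz_rel_app. unfold tau_rel, sigma_rel; simpl. split.
    + intros [m [[z1 [z2 [H1 [[H2 H2'] [H3 H3']]]]] Hm]]. subst. apply IH in Hm.
      exists m, (comp L b m). repeat split; auto.
    + intros [z1 [z2 [H1 [[H2 H2'] [H3 H3']]]]]. subst. exists z1. split.
      * exists x, (comp L b z1). repeat split; auto.
      * apply IH; auto.
Qed.

Lemma zz_rel_inj z x x' y : zz_rel z x y -> zz_rel z x' y -> x = x'.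
Proof.
  revert x x' y; induction z as [|[a b] z IH]; intros x x' y; simpl.
  - intros -> ->; auto.
  - unfold tau_rel, sigma_rel.
    intros [z1 [z2 [H1 [[H2 H2'] [H3 H3']]]]] [z1' [z2' [H1' [[H4 H4'] [H5 H5']]]]].
    subst. assert (z1 = z1') as <- by (apply (left_cancel L b); congruence).
    eauto.
Qed.

Lemma zz_ok_app z z' d0 : zz_ok z -> zz_ok z' ->
  src L (fst (hd d0 z')) = src L (snd (last z d0)) -> zz_ok (z ++ z').
Proof.
  induction z as [|[a b] z IH]; intros Hz Hz' Hlink; [contradiction |].
  destruct z' as [|[c d] q]; [contradiction |].
  destruct z as [|[a' b'] z]; simpl in *; [tauto |].
  destruct Hz as (Hab & Hsrc & Hz). repeat split; auto. apply IH; auto.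
Qed.

Lemma zz_ok_rev z : zz_ok z -> zz_ok (zz_rev z).
Proof.
  induction z as [|[a b] q IH]; intro Hz; [contradiction |].
  destruct q as [|[a' b'] q]; simpl in *; [auto |].
  destruct Hz as (Hab & Hsrc & Hq).
  apply (zz_ok_app _ _ (a, b)); simpl; auto. rewrite last_last. auto.
Qed.

Lemma zz_src_rcons z v : zz_src z v -> exists r a b, z = r ++ [(a, b)] /\ src L b = v.
Proof.
  intros [a [b [Hlast [Hne Hb]]]]. exists (removelast z), a, b. split; auto.
  rewrite <- Hlast. apply app_removelast_last; auto.
Qed.

(* [z ++ zz_rev z' ++ z'] is the zigzag z z'^{-1} z' of the paper, whose domain is A(z) ∩ A(z'). *)
Lemma zz_ok_meet z z' v : zz_ok z -> zz_ok z' -> zz_src z v -> zz_src z' v ->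
  zz_ok (z ++ zz_rev z' ++ z') /\ zz_src (z ++ zz_rev z' ++ z') v.
Proof.
  intros Hz Hz' Hsz Hsz'.
  destruct (zz_src_rcons _ _ Hsz) as [r [c [d [-> Hd]]]].
  destruct (zz_src_rcons _ _ Hsz') as [r' [c' [d' [Ez' Hd']]]].
  split.
  - apply (zz_ok_app _ _ (c, d)); auto.
    + destruct z' as [|[a1 b1] q]; [contradiction |].
      apply (zz_ok_app _ _ (a1, b1)); auto; [apply zz_ok_rev; auto |].
      simpl. rewrite last_last. reflexivity.
    + rewrite Ez' at 1. rewrite zz_rev_rcons, last_last. simpl. congruence.
  - exists c', d'. rewrite Ez', !app_assoc, last_last. repeat split; auto.
    intro H. apply app_eq_nil in H as [_ H]. discriminate.
Qed.

Lemma zz_dom_meet z z' : zz_dom (z ++ zz_rev z' ++ z') = inter (zz_dom z) (zz_dom z').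
Proof.
  apply set_ext; intro x. unfold zz_dom, inter. split.
  - intros [y Hy]. apply zz_rel_app in Hy as [m [Hm Hy]].
    apply zz_rel_app in Hm as [k [Hk Hm]]. rewrite zz_rel_rev in Hm.
    rewrite (zz_rel_inj _ _ _ _ Hm Hk) in Hy. eauto.
  - intros [[y Hy] [k Hk]]. exists y. apply zz_rel_app. exists x. split; auto.
    apply zz_rel_app. exists k. split; auto. apply zz_rel_rev; auto.
Qed.

Lemma D0_nonempty v (E : mset L) : D0 v E -> nonempty E.
Proof. intros [z (_ & _ & _ & Hne)]; auto. Qed.

Lemma D0_inter v (E F : mset L) : D0 v E -> D0 v F -> nonempty (inter E F) -> D0 v (inter E F).
Proof.
  intros [z [Hz [Hsz [-> _]]]] [z' [Hz' [Hsz' [-> _]]]] Hne.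
  destruct (zz_ok_meet _ _ _ Hz Hz' Hsz Hsz') as [Hok Hsrc].
  exists (z ++ zz_rev z' ++ z'). rewrite zz_dom_meet. auto.
Qed.

End Zigzags.

(** * From vΛ* to ultrafilters *)

Section StarToUltrafilter.
Context {L : LCSC} (v : Obj L) (C : family L).
Hypothesis HC : vLstar v C.

Lemma vLstar_D0 E : C E -> D0 v E.
Proof. apply HC. Qed.

Lemma notin_of_not_covers l : ~ covers C l -> forall F, In F l -> ~ C F.
Proof. intros Hn F HF HCF. apply Hn. exists F. split; auto. intros x Fx. exists F; auto. Qed.

Lemma U0_of_vLstar E : C E -> U0 v C (diff E (bigunion [])).
Proof.
  intro HE. exists E, []. repeat split; auto; [intros _ [] |].
  intros [G [HG HGs]]. destruct (D0_nonempty _ _ (vLstar_D0 _ HG)) as [x Gx].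
  destruct (HGs x Gx) as [F [[] _]].
Qed.

Lemma U0_nonempty S : U0 v C S -> nonempty S.
Proof.
  intros [E [l (HE & Hl & Hn & ->)]]. apply NNPP. intro Hempty. apply Hn.
  exists E. split; auto. intros x Ex. apply NNPP. intro Hx. apply Hempty.
  exists x. split; auto.
Qed.

Lemma U0_Av S : U0 v C S -> Av v S.
Proof.
  intros [E [l (HE & Hl & Hn & ->)]]. apply ring_gen_is_ring.
  - apply ring_gen_sub, vLstar_D0; auto.
  - apply ring_bigunion; [apply ring_gen_is_ring |]. intros; apply ring_gen_sub; auto.
Qed.

Lemma U0_directed : directed (U0 v C).
Proof.
  intros S S' [E [l (HE & Hl & Hn & ->)]] [E' [l' (HE' & Hl' & Hn' & ->)]].
  exists (diff (inter E E') (bigunion (l ++ l'))). split.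
  - assert (Hll' : forall F, In F (l ++ l') -> D0 v F)
      by (intros F HF; apply in_app_or in HF as [HF | HF]; auto).
    exists (inter E E'), (l ++ l'). split; [apply HC; auto |]. split; [auto |]. split; [| reflexivity].
    apply HC; auto. intros F HF. apply in_app_or in HF as [HF | HF];
      [apply (notin_of_not_covers l) | apply (notin_of_not_covers l')]; auto.
  - intros x [[Ex E'x] Hx]. rewrite bigunion_app in Hx.
    split; split; auto.
Qed.

Lemma U0_decides S : Av v S -> decides (U0 v C) S.
Proof.
  destruct HC as [[[E HE] _] Hstar].
  intro HS. apply HS; [apply decides_is_ring; [eauto using U0_of_vLstar | apply U0_directed] |].
  intros F HF. destruct (classic (C F)) as [HCF | HCF].
  - exists (diff F (bigunion [])). split; [apply U0_of_vLstar; auto |].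
    left. intros x [Fx _]; auto.
  - exists (diff E (bigunion [F])). split.
    + exists E, [F]. repeat split; auto; [intros G [<- | []]; auto |].
      apply Hstar; intros G [<- | []]; auto.
    + right. intros x [_ Hx] Fx. apply Hx. exists F. simpl; auto.
Qed.

Lemma U0_ultrafilter_base : is_ultrafilter_base (Av v) (U0 v C).
Proof.
  destruct HC as [[[E HE] _] _].
  apply ultrafilter_base_of_decides.
  - apply ring_gen_is_ring.
  - eauto using U0_of_vLstar.
  - intros G HG. split; [apply U0_Av | apply U0_nonempty]; auto.
  - apply U0_directed.
  - apply U0_decides.
Qed.

(* If E were not in C, then E together with the uncovering family would be a
   family of non-members of C covering C. *)
Lemma restrD0_UC : fam_eq (restrD0 v (UC v C)) C.
Proof.
  intro E. split.
  - intros [[_ [B [[E' [l (HE' & Hl & Hn & ->)]] HBE]]] HE].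
    apply NNPP. intro HCE. apply (proj2 HC (E :: l)).
    + intros F [<- | HF]; auto.
    + intros F [<- | HF]; auto. eapply notin_of_not_covers; eauto.
    + exists E'. split; auto. intros x E'x. rewrite bigunion_cons.
      destruct (classic (bigunion l x)); [right | left]; auto. apply HBE. split; auto.
  - intros HE. split; [| apply vLstar_D0; auto]. split; [apply ring_gen_sub, vLstar_D0; auto |].
    exists (diff E (bigunion [])). split; [apply U0_of_vLstar; auto |]. intros x [Ex _]; auto.
Qed.

End StarToUltrafilter.

(** * From ultrafilters to vΛ* *)

Section UltrafilterToStar.
Context {L : LCSC} (v : Obj L) (U : family L).
Hypothesis HU : is_ultrafilter (Av v) U.

Let HA : is_ring (Av v) := ring_gen_is_ring (D0 v).
Let HUA : forall E, U E -> Av v E /\ nonempty E := proj1 (proj2 (proj1 HU)).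
Let HUup : forall E F, U E -> Av v F -> subset E F -> U F := proj2 (proj2 (proj2 (proj1 HU))).

Lemma restrD0_nonempty : exists E, restrD0 v U E.
Proof.
  destruct (proj1 (proj1 HU)) as [S HS].
  destruct (ring_gen_covered _ _ (proj1 (HUA S HS))) as [l [Hl HSl]].
  destruct (ultrafilter_prime _ _ HA HU l) as [F [HF HFU]].
  - intros; apply ring_gen_sub; auto.
  - apply (HUup S); auto. apply ring_bigunion; auto. intros; apply ring_gen_sub; auto.
  - exists F. split; auto.
Qed.

Lemma restrD0_vLstar : vLstar v (restrD0 v U).
Proof.
  split; [split; [apply restrD0_nonempty | split; [|split]] |].
  - intros E [_ HE]; auto.
  - intros E F [HE HDE] [HF HDF].
    assert (HEF : U (inter E F)) by (apply HU; auto).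
    split; auto. apply D0_inter; auto. apply HUA; auto.
  - intros E F [HE _] HDF HEF. split; auto. apply (HUup E); auto. apply ring_gen_sub; auto.
  - intros l Hl Hn [E [[HE _] HEl]].
    destruct (ultrafilter_prime _ _ HA HU l) as [F [HF HFU]].
    + intros; apply ring_gen_sub; auto.
    + apply (HUup E); auto. apply ring_bigunion; auto. intros; apply ring_gen_sub; auto.
    + apply (Hn F HF). split; auto.
Qed.

Lemma U0_restrD0_sub B : U0 v (restrD0 v U) B -> U B.
Proof.
  intros [E [l ([HE _] & Hl & Hn & ->)]].
  apply ultrafilter_diff_bigunion with (A := Av v); auto.
  - intros; apply ring_gen_sub; auto.
  - intros F HF HFU. apply (notin_of_not_covers _ _ Hn F HF). split; auto.
Qed.

(* U_C ⊆ U for C = U ∩ D^(0)_v, and U_C is maximal. *)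
Lemma UC_restrD0 : fam_eq (UC v (restrD0 v U)) U.
Proof.
  assert (HUC_U : fam_sub (UC v (restrD0 v U)) U).
  { intros X [HX [B [HB HBX]]]. apply (HUup B); auto.
    apply U0_restrD0_sub; auto. }
  destruct (U0_ultrafilter_base v _ restrD0_vLstar) as (_ & _ & _ & _ & Hmax).
  intro X. split; [apply HUC_U | apply (Hmax U (proj1 HU) HUC_U)].
Qed.

End UltrafilterToStar.

Theorem mainTheorem4 (L : LCSC) (v : Obj L) :
  (forall C, vLstar v C -> is_ultrafilter_base (Av v) (U0 v C)) /\
  (forall C, vLstar v C -> fam_eq (restrD0 v (UC v C)) C) /\
  (forall U, is_ultrafilter (Av v) U ->
      vLstar v (restrD0 v U) /\ fam_eq (UC v (restrD0 v U)) U).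
Proof.
  split; [|split].
  - apply U0_ultrafilter_base.
  - apply restrD0_UC.
  - intros U HU. split; [apply restrD0_vLstar | apply UC_restrD0]; auto.
Qed.
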